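(* Let $n\ge0$ and $k\ge1$ be integers, $\rho\ne0$ real, $0\le q<1$, and $x,y$ complex numbers. Then $$B_{n,\rho,q}^{(k)}(x)=\sum_{l=0}^{n}\sum_{m=0}^{n}(-1)^{n-m}m!\,\rho^{n-l}S_2\!\left(n,m,\tfrac{x}{\rho}\right)S_2\!\left(m,l,\tfrac{y}{\rho}\right)c_{l,\rho,q}^{(k)}(y),$$ $$B_{n,\rho,q}^{(k)}(x)=\sum_{l=0}^{n}\sum_{m=0}^{n}(-1)^{n}m!\,\rho^{n-l}S_2\!\left(n,m,\tfrac{x}{\rho}\right)S_2\!\left(m,l,-\tfrac{y}{\rho}\right)\widehat c_{l,\rho,q}^{(k)}(y),$$ $$c_{n,\rho,q}^{(k)}(x)=\sum_{l=0}^{n}\sum_{m=0}^{n}\frac{(-1)^{n-m}}{m!}\rho^{n-l}S_1\!\left(n,m,\tfrac{x}{\rho}\right)S_1\!\left(m,l,\tfrac{y}{\rho}\right)B_{l,\rho,q}^{(k)}(y),$$ $$\widehat c_{n,\rho,q}^{(k)}(x)=\sum_{l=0}^{n}\sum_{m=0}^{n}\frac{(-1)^{n}}{m!}\rho^{n-l}S_1\!\left(n,m,-\tfrac{x}{\rho}\right)S_1\!\left(m,l,\tfrac{y}{\rho}\right)B_{l,\rho,q}^{(k)}(y).$$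
   Context: For real $0\le q<1$ (with $0^0=1$), $[x]_q=\frac{1-q^x}{1-q}$. ${\rm Li}_{k,q}(w)=\sum_{m\ge1}w^m/[m]_q^k$. The $q$-poly-Bernoulli polynomials with parameter $\rho$: $\frac{\rho}{1-e^{-\rho t}}{\rm Li}_{k,q}\left(\frac{1-e^{-\rho t}}{\rho}\right)e^{-tz}=\sum_{n\ge0} B_{n,\rho,q}^{(k)}(z)\frac{t^n}{n!}$ (formal power series in $t$). Jackson's $q$-integral: $\int_0^1 f(x)\,d_qx=(1-q)\sum_{j\ge0} f(q^j)q^j$; multiple integrals are iterated. $(x)_n=x(x-1)\cdots(x-n+1)$, $(x)_0=1$. The $q$-poly-Cauchy polynomials of the first and second kind with parameter $\rho$ are $c_{n,\rho,q}^{(k)}(z)=\rho^n\int_0^1\cdots\int_0^1\left(\frac{x_1\cdots x_k-z}{\rho}\right)_n d_qx_1\cdots d_qx_k$ and $\widehat c_{n,\rho,q}^{(k)}(z)=\rho^n\int_0^1\cdots\int_0^1\left(\frac{-x_1\cdots x_k+z}{\rho}\right)_n d_qx_1\cdots d_qx_k$ ($k$-fold). Weighted Stirling numbers (Carlitz): $\frac{(1-t)^{-x}(-\ln(1-t))^m}{m!}=\sum_{n\ge0}S_1(n,m,x)\frac{t^n}{n!}$ and $\frac{e^{xt}(e^t-1)^m}{m!}=\sum_{n\ge0}S_2(n,m,x)\frac{t^n}{n!}$; both vanish when $n<m$. *)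

From Stdlib Require Import Reals ClassicalEpsilon Arith.
Open Scope R_scope.

Record Cx := mkC { Re : R; Im : R }.
Definition RtoC (r : R) : Cx := mkC r 0.
Definition C0 : Cx := RtoC 0.
Definition C1 : Cx := RtoC 1.
Definition Cadd (a b : Cx) : Cx := mkC (Re a + Re b) (Im a + Im b).
Definition Copp (a : Cx) : Cx := mkC (- Re a) (- Im a).
Definition Csub (a b : Cx) : Cx := Cadd a (Copp b).
Definition Cmul (a b : Cx) : Cx :=
  mkC (Re a * Re b - Im a * Im b) (Re a * Im b + Im a * Re b).
Definition Cscale (r : R) (a : Cx) : Cx := Cmul (RtoC r) a.
Fixpoint Cpow (a : Cx) (n : nat) : Cx :=
  match n with O => C1 | S n' => Cmul a (Cpow a n') end.
(* Csum n f = f 0 + ... + f n *)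
Fixpoint Csum (n : nat) (f : nat -> Cx) : Cx :=
  match n with O => f O | S n' => Cadd (Csum n' f) (f n) end.
(* Cprod n f = f 0 * ... * f (n-1) (empty product = 1) *)
Fixpoint Cprod (n : nat) (f : nat -> Cx) : Cx :=
  match n with O => C1 | S n' => Cmul (Cprod n' f) (f n') end.

Definition Cfall (w : Cx) (n : nat) : Cx := Cprod n (fun i => Csub w (RtoC (INR i))).
Definition Crise (w : Cx) (n : nat) : Cx := Cprod n (fun i => Cadd w (RtoC (INR i))).

Definition Rser_lim (a : nat -> R) : R :=
  match excluded_middle_informative (exists l, infinite_sum a l) with
  | left H => proj1_sig (constructive_indefinite_description _ H)
  | right _ => 0
  end.
(* a complex series converges iff real and imaginary parts converge *)
Definition Cser_lim (a : nat -> Cx) : Cx :=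
  mkC (Rser_lim (fun j => Re (a j))) (Rser_lim (fun j => Im (a j))).

Definition ser := nat -> Cx.
Definition sone : ser := fun n => match n with O => C1 | _ => C0 end.
Definition sadd (a b : ser) : ser := fun n => Cadd (a n) (b n).
Definition ssub (a b : ser) : ser := fun n => Csub (a n) (b n).
Definition sscale (r : R) (a : ser) : ser := fun n => Cscale r (a n).
Definition smul (a b : ser) : ser := fun n => Csum n (fun i => Cmul (a i) (b (n - i)%nat)).
Fixpoint spow (a : ser) (m : nat) : ser :=
  match m with O => sone | S m' => smul a (spow a m') end.
Definition sexp (a : Cx) : ser := fun n => Cscale (/ INR (fact n)) (Cpow a n).
(* (1 - t)^{-x} = sum_j x(x+1)...(x+j-1)/j! t^j *)
Definition sbinneg (x : Cx) : ser := fun n => Cscale (/ INR (fact n)) (Crise x n).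
(* -ln(1 - t) = sum_{j>=1} t^j / j *)
Definition smlog : ser := fun n => match n with O => C0 | _ => RtoC (/ INR n) end.

Definition qnum (q : R) (m : nat) : R := (1 - q ^ m) / (1 - q).

Definition ubern (rho : R) : ser := sscale (/ rho) (ssub sone (sexp (RtoC (- rho)))).
(* rho/(1-e^{-rho t}) * Li_{k,q}(u) = (1/u) sum_{m>=1} u^m/[m]_q^k
   = sum_{m>=1} u^{m-1}/[m]_q^k ; since u^{m-1} has order m-1, only m <= n+1
   contribute to the coefficient of t^n. *)
Definition LiOverU (rho q : R) (k : nat) : ser :=
  fun n => Csum n (fun m => Cscale (/ (qnum q (S m)) ^ k) (spow (ubern rho) m n)).
Definition qpolyB (n : nat) (rho q : R) (k : nat) (z : Cx) : Cx :=
  Cscale (INR (fact n)) (smul (LiOverU rho q k) (sexp (Copp z)) n).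

(* e^{xt}(e^t-1)^m/m! = sum_n S2(n,m,x) t^n/n! *)
Definition S2w (n m : nat) (x : Cx) : Cx :=
  Cscale (INR (fact n))
    (smul (sexp x) (sscale (/ INR (fact m)) (spow (ssub (sexp C1) sone) m)) n).
(* (1-t)^{-x}(-ln(1-t))^m/m! = sum_n S1(n,m,x) t^n/n! *)
Definition S1w (n m : nat) (x : Cx) : Cx :=
  Cscale (INR (fact n))
    (smul (sbinneg x) (sscale (/ INR (fact m)) (spow smlog m)) n).

Definition jint (q : R) (f : R -> Cx) : Cx :=
  Cscale (1 - q) (Cser_lim (fun j => Cscale (q ^ j) (f (q ^ j)))).
(* k-fold iterated Jackson integral of g(x_1 ... x_k) *)
Fixpoint mjint (q : R) (k : nat) (g : R -> Cx) : Cx :=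
  match k with
  | O => g 1
  | S k' => jint q (fun x1 => mjint q k' (fun p => g (x1 * p)))
  end.

Definition qpolyC (n : nat) (rho q : R) (k : nat) (z : Cx) : Cx :=
  Cscale (rho ^ n) (mjint q k (fun P => Cfall (Cscale (/ rho) (Csub (RtoC P) z)) n)).
Definition qpolyChat (n : nat) (rho q : R) (k : nat) (z : Cx) : Cx :=
  Cscale (rho ^ n) (mjint q k (fun P => Cfall (Cscale (/ rho) (Csub z (RtoC P))) n)).

(* Everything reduces to finite identities between weighted Stirling numbers.
   Since [u = (1 - e^{-rho t}) / rho] is a dilate of [e^t - 1], extracting coefficients gives
   [B_n(z) = sum_m m! (-rho)^n (-1/rho)^m S2(n,m,z/rho) / [m+1]_q^k].  Writing the integrand
   [(s x - w)_l] of [c] and [c^] ([s = 1/rho] resp. [-1/rho]) as a polynomial in [x] with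
   [S1] coefficients and integrating [x^i] to [1/[i+1]_q^k] gives the analogous [S1]
   expansions of [c_n] and [c^_n].  The first two identities then follow from
   [sum_l S2(m,l,w) (z - w)_l = z^m] under the integral, the last two from the orthogonality
   [sum_l (-1)^l S1(m,l,w) S2(l,j,w) = (-1)^m [m = j]]; both come by induction from the
   recurrences of [S1] and [S2], which are read off their generating functions. *)

From Pilot Require Import Defs.
From Stdlib Require Import Reals Arith Lia Lra FunctionalExtensionality ClassicalEpsilon.
Open Scope R_scope.

(** * Complex arithmetic and finite sums *)

Lemma Cx_ext (a b : Cx) : Re a = Re b -> Im a = Im b -> a = b.
Proof. destruct a, b; simpl; intros -> ->; reflexivity. Qed.

Ltac Cx_compute :=
  unfold Csub, Cadd, Copp, Cmul, Cscale, C0, Defs.C1, RtoC; apply Cx_ext; simpl; ring.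

Lemma Cx_ring : ring_theory C0 Defs.C1 Cadd Cmul Csub Copp (@eq Cx).
Proof. constructor; intros; Cx_compute. Qed.
Add Ring Cx_ring : Cx_ring.

Lemma RtoC_add a b : RtoC (a + b) = Cadd (RtoC a) (RtoC b).
Proof. Cx_compute. Qed.
Lemma RtoC_mul a b : RtoC (a * b) = Cmul (RtoC a) (RtoC b).
Proof. Cx_compute. Qed.
Lemma RtoC_opp a : RtoC (- a) = Copp (RtoC a).
Proof. Cx_compute. Qed.
Lemma RtoC_m1 : RtoC (-1) = Copp Defs.C1.
Proof. Cx_compute. Qed.
Lemma RtoC_sub a b : RtoC (a - b) = Csub (RtoC a) (RtoC b).
Proof. Cx_compute. Qed.

Lemma Cpow_RtoC r n : Cpow (RtoC r) n = RtoC (r ^ n).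
Proof. induction n as [|n IH]; simpl; [reflexivity | now rewrite IH, RtoC_mul]. Qed.
Lemma Cpow_mul a b n : Cpow (Cmul a b) n = Cmul (Cpow a n) (Cpow b n).
Proof. induction n as [|n IH]; simpl; [Cx_compute | rewrite IH; ring]. Qed.
Lemma Cpow_add a n m : Cpow a (n + m) = Cmul (Cpow a n) (Cpow a m).
Proof. induction n as [|n IH]; simpl; [ring | rewrite IH; ring]. Qed.

Lemma Cfall_S w n : Cfall w (S n) = Cmul (Cfall w n) (Csub w (RtoC (INR n))).
Proof. reflexivity. Qed.
Lemma Crise_S w n : Crise w (S n) = Cmul (Crise w n) (Cadd w (RtoC (INR n))).
Proof. reflexivity. Qed.

Lemma Cfall_Crise x l : Cfall x l = Cmul (RtoC ((-1) ^ l)) (Crise (Copp x) l).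
Proof.
  induction l as [|l IH]; [unfold Cfall, Crise; simpl; change (RtoC 1) with Defs.C1; ring|].
  rewrite Cfall_S, Crise_S, IH; simpl pow; rewrite RtoC_mul, RtoC_m1.
  unfold Csub; ring.
Qed.

Lemma Csum_S n f : Csum (S n) f = Cadd (Csum n f) (f (S n)).
Proof. reflexivity. Qed.

Lemma Csum_ext n f g : (forall i, (i <= n)%nat -> f i = g i) -> Csum n f = Csum n g.
Proof.
  induction n as [|n IH]; intros H; simpl; [apply H; lia|].
  rewrite IH, H by first [lia | intros; apply H; lia]; reflexivity.
Qed.

Lemma Csum_eq0 n f : (forall i, (i <= n)%nat -> f i = C0) -> Csum n f = C0.
Proof.
  induction n as [|n IH]; intros H; simpl; [apply H; lia|].
  rewrite IH, H by first [lia | intros; apply H; lia]; ring.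
Qed.

Lemma Csum_add n f g : Csum n (fun i => Cadd (f i) (g i)) = Cadd (Csum n f) (Csum n g).
Proof. induction n as [|n IH]; simpl; [reflexivity | rewrite IH; ring]. Qed.
Lemma Csum_sub n f g : Csum n (fun i => Csub (f i) (g i)) = Csub (Csum n f) (Csum n g).
Proof. induction n as [|n IH]; simpl; [reflexivity | rewrite IH; unfold Csub; ring]. Qed.
Lemma Csum_mull n c f : Csum n (fun i => Cmul c (f i)) = Cmul c (Csum n f).
Proof. induction n as [|n IH]; simpl; [reflexivity | rewrite IH; ring]. Qed.
Lemma Csum_mulr n c f : Csum n (fun i => Cmul (f i) c) = Cmul (Csum n f) c.
Proof. induction n as [|n IH]; simpl; [reflexivity | rewrite IH; ring]. Qed.

Lemma Csum_recl n f : Csum (S n) f = Cadd (f O) (Csum n (fun i => f (S i))).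
Proof.
  induction n as [|n IH]; [reflexivity|].
  rewrite Csum_S, IH; simpl; ring.
Qed.

Lemma Csum_recl0 n f : f O = C0 -> Csum (S n) f = Csum n (fun i => f (S i)).
Proof. intros H; rewrite Csum_recl, H; ring. Qed.
Lemma Csum_recr0 n f : f (S n) = C0 -> Csum (S n) f = Csum n f.
Proof. intros H; rewrite Csum_S, H; ring. Qed.

Lemma Csum_exchange n m F :
  Csum n (fun i => Csum m (F i)) = Csum m (fun j => Csum n (fun i => F i j)).
Proof. induction n as [|n IH]; simpl; [reflexivity | now rewrite IH, <- Csum_add]. Qed.

Lemma Csum_widen m n f : (m <= n)%nat -> (forall i, (m < i <= n)%nat -> f i = C0) ->
  Csum n f = Csum m f.
Proof.
  induction 1 as [|n Hmn IH]; intros H; [reflexivity|].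
  rewrite Csum_recr0, IH by (intros; apply H; lia); reflexivity.
Qed.

Lemma Csum_shift m n f : (m <= n)%nat -> (forall i, (i < m)%nat -> f i = C0) ->
  Csum n f = Csum (n - m) (fun j => f (m + j)%nat).
Proof.
  revert n f; induction m as [|m IH]; intros n f Hmn H; [now rewrite Nat.sub_0_r|].
  destruct n as [|n]; [lia|].
  rewrite Csum_recl0 by (apply H; lia).
  apply (IH n (fun i => f (S i))); [lia | intros; apply H; lia].
Qed.

Lemma Csum_reflect n f : Csum n f = Csum n (fun i => f (n - i)%nat).
Proof.
  induction n as [|n IH]; [reflexivity|].
  rewrite Csum_S, IH, (Csum_recl n (fun i => f (S n - i)%nat)), Nat.sub_0_r.
  simpl Nat.sub; ring.
Qed.

Lemma Csum_triangle n F :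
  Csum n (fun s => Csum s (fun i => F i s)) =
  Csum n (fun i => Csum (n - i) (fun j => F i (i + j)%nat)).
Proof.
  induction n as [|n IH]; [reflexivity|].
  rewrite Csum_S, IH, (Csum_S n (fun i => Csum (S n - i) _)), Nat.sub_diag.
  simpl (Csum 0 _); rewrite Nat.add_0_r, (Csum_S n (fun i => F i (S n))).
  rewrite Cx_ring.(Radd_assoc), <- Csum_add; f_equal.
  apply Csum_ext; intros i Hi.
  replace (S n - i)%nat with (S (n - i)) by lia.
  rewrite Csum_S; do 2 f_equal; lia.
Qed.

Lemma Csum_delta N m g : (m <= N)%nat ->
  Csum N (fun i => if Nat.eqb i m then g i else C0) = g m.
Proof.
  intros HmN; rewrite (Csum_widen m N) by
    first [assumption | intros i Hi; destruct (Nat.eqb_spec i m); [lia | reflexivity]].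
  destruct m as [|m]; [reflexivity|].
  rewrite Csum_S, Nat.eqb_refl, Csum_eq0; [ring|].
  intros i Hi; destruct (Nat.eqb_spec i (S m)); [lia | reflexivity].
Qed.

(** * Formal power series *)

Definition szero : ser := fun _ => C0.
Definition sopp (a : ser) : ser := fun n => Copp (a n).
Definition sconst (c : Cx) : ser := fun n => match n with O => c | _ => C0 end.
Definition sder (a : ser) : ser := fun n => Cmul (RtoC (INR (S n))) (a (S n)).
Definition sdil (c : Cx) (a : ser) : ser := fun n => Cmul (Cpow c n) (a n).

Lemma sone_sconst : sone = sconst Defs.C1.
Proof. apply functional_extensionality; intros [|n]; reflexivity. Qed.

Lemma smul_sconstl c a : smul (sconst c) a = fun n => Cmul c (a n).
Proof.
  apply functional_extensionality; intros [|n]; [reflexivity|].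
  unfold smul; rewrite Csum_recl, Csum_eq0 by (intros; simpl; ring).
  simpl; ring.
Qed.

Lemma smulC a b : smul a b = smul b a.
Proof.
  apply functional_extensionality; intro n; unfold smul.
  rewrite Csum_reflect; apply Csum_ext; intros i Hi.
  replace (n - (n - i))%nat with i by lia; ring.
Qed.

Lemma smulA a b c : smul a (smul b c) = smul (smul a b) c.
Proof.
  apply functional_extensionality; intro n; unfold smul.
  transitivity (Csum n (fun s => Csum s (fun i =>
    Cmul (Cmul (a i) (b (s - i)%nat)) (c (n - s)%nat)))).
  - rewrite Csum_triangle; apply Csum_ext; intros i Hi.
    rewrite <- Csum_mull; apply Csum_ext; intros j Hj.
    replace (i + j - i)%nat with j by lia.
    replace (n - (i + j))%nat with (n - i - j)%nat by lia; ring.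
  - apply Csum_ext; intros; apply Csum_mulr.
Qed.

Lemma ser_ring : ring_theory szero sone sadd smul ssub sopp (@eq ser).
Proof.
  constructor; intros; try (apply functional_extensionality; intro n;
    unfold sadd, ssub, sopp, szero; ring).
  - rewrite sone_sconst, smul_sconstl; apply functional_extensionality; intro; ring.
  - apply smulC.
  - apply smulA.
  - apply functional_extensionality; intro n; unfold smul, sadd.
    rewrite <- Csum_add; apply Csum_ext; intros; ring.
Qed.
Add Ring ser_ring : ser_ring.

Lemma sconst_add a b : sadd (sconst a) (sconst b) = sconst (Cadd a b).
Proof. apply functional_extensionality; intros [|n]; unfold sadd; simpl; ring. Qed.
Lemma sconst_mul a b : smul (sconst a) (sconst b) = sconst (Cmul a b).
Proof. rewrite smul_sconstl; apply functional_extensionality; intros [|n]; simpl; ring. Qed.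
Lemma sconst_opp a : sconst (Copp a) = sopp (sconst a).
Proof.
  apply functional_extensionality; intros [|n]; unfold sopp; simpl; [reflexivity|].
  Cx_compute.
Qed.
Lemma sscale_sconst r a : sscale r a = smul (sconst (RtoC r)) a.
Proof. now rewrite smul_sconstl. Qed.

Lemma spow_sconst c l : spow (sconst c) l = sconst (Cpow c l).
Proof.
  induction l as [|l IH]; simpl; [apply sone_sconst | now rewrite IH, sconst_mul].
Qed.
Lemma spow_smul a b l : spow (smul a b) l = smul (spow a l) (spow b l).
Proof. induction l as [|l IH]; simpl; [ring | rewrite IH; ring]. Qed.

Lemma smul_vanish a b m : (forall i, (i < m)%nat -> b i = C0) ->
  forall n, (n < m)%nat -> smul a b n = C0.
Proof.
  intros Hb n Hn; apply Csum_eq0; intros i Hi; rewrite Hb by lia; ring.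
Qed.

Lemma spow_vanish a : a O = C0 -> forall l n, (n < l)%nat -> spow a l n = C0.
Proof.
  intros Ha0 l; induction l as [|l IH]; intros n Hn; [lia|].
  apply Csum_eq0; intros [|i] Hi; [rewrite Ha0 | rewrite IH by lia]; ring.
Qed.

Lemma sder_sub a b : sder (ssub a b) = ssub (sder a) (sder b).
Proof. apply functional_extensionality; intro n; unfold sder, ssub, Csub; ring. Qed.
Lemma sder_sconst c : sder (sconst c) = szero.
Proof. apply functional_extensionality; intro n; unfold sder, szero; simpl; ring. Qed.
Lemma sder_sone : sder sone = szero.
Proof. rewrite sone_sconst; apply sder_sconst. Qed.

Lemma sder_mul a b : sder (smul a b) = sadd (smul (sder a) b) (smul a (sder b)).
Proof.
  apply functional_extensionality; intro n; unfold sder, sadd, smul.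
  assert (Hl : Csum n (fun i => Cmul (Cmul (RtoC (INR (S i))) (a (S i))) (b (n - i)%nat))
    = Csum (S n) (fun i => Cmul (RtoC (INR i)) (Cmul (a i) (b (S n - i)%nat)))).
  { rewrite Csum_recl0 by (simpl; change (RtoC 0) with C0; ring).
    apply Csum_ext; intros; simpl Nat.sub; ring. }
  assert (Hr : Csum n (fun i => Cmul (a i) (Cmul (RtoC (INR (S (n - i)))) (b (S (n - i)))))
    = Csum (S n) (fun i => Cmul (RtoC (INR (S n - i))) (Cmul (a i) (b (S n - i)%nat)))).
  { rewrite Csum_recr0 by (rewrite Nat.sub_diag; simpl; change (RtoC 0) with C0; ring).
    apply Csum_ext; intros i Hi; replace (S n - i)%nat with (S (n - i)) by lia; ring. }
  rewrite Hl, Hr, <- Csum_add, <- Csum_mull; apply Csum_ext; intros i Hi.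
  rewrite minus_INR, RtoC_sub by lia; ring.
Qed.

Lemma sder_spow a l : sder (spow a (S l)) =
  smul (sconst (RtoC (INR (S l)))) (smul (spow a l) (sder a)).
Proof.
  induction l as [|l IH].
  - simpl; rewrite sder_mul, sder_sone; change (RtoC 1) with Defs.C1.
    rewrite <- sone_sconst; ring.
  - change (spow a (S (S l))) with (smul a (spow a (S l))).
    rewrite sder_mul, IH, (S_INR (S l)), RtoC_add, <- sconst_add.
    change (RtoC 1) with Defs.C1; rewrite <- sone_sconst.
    simpl spow; ring.
Qed.

Lemma INR_fact_S_inv n : INR (S n) * / INR (fact (S n)) = / INR (fact n).
Proof.
  change (fact (S n)) with (S n * fact n)%nat; rewrite mult_INR.
  field; split; [apply INR_fact_neq_0 | apply not_0_INR; lia].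
Qed.

Lemma sder_sexp w : sder (sexp w) = smul (sconst w) (sexp w).
Proof.
  rewrite smul_sconstl; apply functional_extensionality; intro n.
  unfold sder, sexp, Cscale; simpl Cpow.
  rewrite <- (INR_fact_S_inv n), RtoC_mul; ring.
Qed.

Lemma sdil_mul c a b : sdil c (smul a b) = smul (sdil c a) (sdil c b).
Proof.
  apply functional_extensionality; intro n; unfold sdil, smul.
  rewrite <- Csum_mull; apply Csum_ext; intros i Hi.
  replace n with (i + (n - i))%nat at 1 by lia; rewrite Cpow_add; ring.
Qed.
Lemma sdil_sone c : sdil c sone = sone.
Proof. apply functional_extensionality; intros [|n]; unfold sdil, sone; simpl; ring. Qed.
Lemma sdil_spow c a l : sdil c (spow a l) = spow (sdil c a) l.
Proof.
  induction l as [|l IH]; simpl; [apply sdil_sone | now rewrite sdil_mul, IH].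
Qed.
Lemma sdil_sub c a b : sdil c (ssub a b) = ssub (sdil c a) (sdil c b).
Proof. apply functional_extensionality; intro n; unfold sdil, ssub, Csub; ring. Qed.
Lemma sdil_sexp c w : sdil c (sexp w) = sexp (Cmul c w).
Proof.
  apply functional_extensionality; intro n; unfold sdil, sexp, Cscale.
  rewrite Cpow_mul; ring.
Qed.

(** * Weighted Stirling numbers *)

Definition sexpm1 : ser := ssub (sexp Defs.C1) sone.
Definition S2w_gf (w : Cx) (l : nat) : ser := smul (sexp w) (spow sexpm1 l).
Definition S1w_gf (w : Cx) (l : nat) : ser := smul (sbinneg w) (spow smlog l).

Lemma sexpm1_0 : sexpm1 O = C0.
Proof. unfold sexpm1, ssub, sexp, sone, Cscale; simpl; rewrite Rinv_1; Cx_compute. Qed.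

Lemma S2w_coef n l w :
  S2w n l w = Cmul (RtoC (INR (fact n) * / INR (fact l))) (S2w_gf w l n).
Proof.
  unfold S2w, S2w_gf, Cscale; rewrite sscale_sconst.
  replace (smul (sexp w) (smul (sconst (RtoC (/ INR (fact l))))
           (spow (ssub (sexp Defs.C1) sone) l)))
    with (smul (sconst (RtoC (/ INR (fact l)))) (smul (sexp w) (spow sexpm1 l)))
    by (unfold sexpm1; ring).
  rewrite smul_sconstl, RtoC_mul; ring.
Qed.

Lemma S1w_coef n l w :
  S1w n l w = Cmul (RtoC (INR (fact n) * / INR (fact l))) (S1w_gf w l n).
Proof.
  unfold S1w, S1w_gf, Cscale; rewrite sscale_sconst.
  replace (smul (sbinneg w) (smul (sconst (RtoC (/ INR (fact l)))) (spow smlog l)))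
    with (smul (sconst (RtoC (/ INR (fact l)))) (smul (sbinneg w) (spow smlog l)))
    by ring.
  rewrite smul_sconstl, RtoC_mul; ring.
Qed.

(* Shifting the row index of the [n! / l!]-normalised coefficient is differentiation. *)
Lemma fact_coef_S (a : ser) m r :
  Cmul (RtoC (INR (fact (S m)) * r)) (a (S m)) = Cmul (RtoC (INR (fact m) * r)) (sder a m).
Proof.
  unfold sder; change (fact (S m)) with (S m * fact m)%nat.
  rewrite mult_INR, !RtoC_mul; ring.
Qed.

Lemma fact_ratio_S m l :
  INR (fact m) * / INR (fact (S l)) * INR (S l) = INR (fact m) * / INR (fact l).
Proof. rewrite <- (INR_fact_S_inv l); ring. Qed.

Lemma sder_S2w_gf_S w l : sder (S2w_gf w (S l)) =
  sadd (smul (sconst (Cadd w (RtoC (INR (S l))))) (S2w_gf w (S l)))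
       (smul (sconst (RtoC (INR (S l)))) (S2w_gf w l)).
Proof.
  assert (Hd : sder sexpm1 = sadd sexpm1 sone).
  { unfold sexpm1; rewrite sder_sub, sder_sone, sder_sexp, <- sone_sconst; ring. }
  unfold S2w_gf; rewrite sder_mul, sder_spow, Hd, sder_sexp, <- sconst_add.
  simpl spow; ring.
Qed.

Lemma sder_S2w_gf_0 w : sder (S2w_gf w O) = smul (sconst w) (S2w_gf w O).
Proof. unfold S2w_gf; simpl spow; rewrite sder_mul, sder_sexp, sder_sone; ring. Qed.

Lemma S2w_SS m l w : S2w (S m) (S l) w =
  Cadd (Cmul (Cadd w (RtoC (INR (S l)))) (S2w m (S l) w)) (S2w m l w).
Proof.
  rewrite !S2w_coef, fact_coef_S, sder_S2w_gf_S; unfold sadd; rewrite !smul_sconstl.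
  rewrite <- (fact_ratio_S m l), !RtoC_mul; ring.
Qed.

Lemma S2w_S0 m w : S2w (S m) O w = Cmul w (S2w m O w).
Proof. rewrite !S2w_coef, fact_coef_S, sder_S2w_gf_0, smul_sconstl; ring. Qed.

Lemma S2w_lt n l w : (n < l)%nat -> S2w n l w = C0.
Proof.
  intros Hnl; rewrite S2w_coef; unfold S2w_gf.
  rewrite (smul_vanish _ _ l); [ring | | exact Hnl].
  intros; apply spow_vanish; [apply sexpm1_0 | assumption].
Qed.

Lemma S2w00 w : S2w O O w = Defs.C1.
Proof. unfold S2w, smul, sexp, Cscale; simpl; rewrite Rinv_1; Cx_compute. Qed.

(* On the factors of the [S1w] generating function, [(1 - t) d/dt] plays the role that
   [d/dt] plays for [S2w]: it maps [(1-t)^{-w}] to [w (1-t)^{-w}] and [-ln(1-t)] to [1]. *)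
Definition sX : ser := fun n => match n with 1%nat => Defs.C1 | _ => C0 end.
Definition s1mX : ser := ssub sone sX.

Lemma s1mX_coef a m :
  smul s1mX a m = Csub (a m) (match m with O => C0 | S n => a n end).
Proof.
  unfold s1mX; replace (smul (ssub sone sX) a) with (ssub a (smul sX a)) by ring.
  unfold ssub; f_equal; unfold smul.
  destruct m as [|[|m]]; [simpl; ring | simpl; ring|].
  rewrite Csum_recl0 by (simpl; ring); rewrite Csum_recl, Csum_eq0 by (intros; simpl; ring).
  simpl; ring.
Qed.

Lemma s1mX_sder_sbinneg w : smul s1mX (sder (sbinneg w)) = smul (sconst w) (sbinneg w).
Proof.
  assert (Hd : forall m, sder (sbinneg w) m =
    Cmul (RtoC (/ INR (fact m))) (Crise w (S m))).
  { intro m; unfold sder, sbinneg, Cscale; rewrite <- (INR_fact_S_inv m), RtoC_mul; ring. }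
  rewrite smul_sconstl; apply functional_extensionality; intro m.
  rewrite s1mX_coef; destruct m as [|m]; rewrite !Hd; unfold sbinneg, Cscale, Csub.
  - simpl; rewrite Rinv_1; unfold Crise, Cprod; simpl; change (RtoC 0) with C0; ring.
  - rewrite (Crise_S w (S m)), <- (INR_fact_S_inv m), RtoC_mul; ring.
Qed.

Lemma s1mX_sder_smlog : smul s1mX (sder smlog) = sone.
Proof.
  apply functional_extensionality; intro m; rewrite s1mX_coef.
  assert (Hd : forall n, sder smlog n = Defs.C1).
  { intro n; unfold sder, smlog; rewrite <- RtoC_mul, Rinv_r by (apply not_0_INR; lia).
    reflexivity. }
  destruct m as [|m]; rewrite !Hd; unfold sone, Csub; simpl; ring.
Qed.

Lemma s1mX_sder_S1w_gf_S w l : smul s1mX (sder (S1w_gf w (S l))) =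
  sadd (smul (sconst w) (S1w_gf w (S l))) (smul (sconst (RtoC (INR (S l)))) (S1w_gf w l)).
Proof.
  unfold S1w_gf; rewrite sder_mul, sder_spow.
  transitivity (sadd (smul (smul s1mX (sder (sbinneg w))) (spow smlog (S l)))
    (smul (sconst (RtoC (INR (S l))))
       (smul (smul (sbinneg w) (spow smlog l)) (smul s1mX (sder smlog))))); [ring|].
  rewrite s1mX_sder_sbinneg, s1mX_sder_smlog; simpl spow; ring.
Qed.

Lemma s1mX_sder_S1w_gf_0 w : smul s1mX (sder (S1w_gf w O)) = smul (sconst w) (S1w_gf w O).
Proof.
  unfold S1w_gf; simpl spow; rewrite sder_mul, sder_sone.
  transitivity (smul (smul s1mX (sder (sbinneg w))) sone); [ring|].
  rewrite s1mX_sder_sbinneg; ring.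
Qed.

Lemma sder_s1mX a m :
  sder a m = Cadd (smul s1mX (sder a) m) (Cmul (RtoC (INR m)) (a m)).
Proof.
  rewrite s1mX_coef; destruct m as [|m]; unfold Csub.
  - simpl INR; change (RtoC 0) with C0; ring.
  - unfold sder; ring.
Qed.

Lemma S1w_SS m l w : S1w (S m) (S l) w =
  Cadd (Cmul (Cadd (RtoC (INR m)) w) (S1w m (S l) w)) (S1w m l w).
Proof.
  rewrite !S1w_coef, fact_coef_S, sder_s1mX, s1mX_sder_S1w_gf_S.
  unfold sadd; rewrite !smul_sconstl, <- (fact_ratio_S m l), !RtoC_mul; ring.
Qed.

Lemma S1w_S0 m w : S1w (S m) O w = Cmul (Cadd (RtoC (INR m)) w) (S1w m O w).
Proof. rewrite !S1w_coef, fact_coef_S, sder_s1mX, s1mX_sder_S1w_gf_0, smul_sconstl; ring. Qed.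

Lemma S1w_lt n l w : (n < l)%nat -> S1w n l w = C0.
Proof.
  intros Hnl; rewrite S1w_coef; unfold S1w_gf.
  rewrite (smul_vanish _ _ l); [ring | | exact Hnl].
  intros; apply spow_vanish; [reflexivity | assumption].
Qed.

Lemma S1w00 w : S1w O O w = Defs.C1.
Proof. unfold S1w, smul, sbinneg, Cscale, Crise; simpl; rewrite Rinv_1; Cx_compute. Qed.

Lemma Csum_S2w_S N m w f : (m < N)%nat ->
  Csum N (fun l => Cmul (S2w (S m) l w) (f l)) =
  Csum N (fun l => Cmul (S2w m l w)
    (Cadd (Cmul (Cadd w (RtoC (INR l))) (f l)) (f (S l)))).
Proof.
  intros HmN; destruct N as [|N]; [lia|].
  rewrite Csum_recl, S2w_S0.
  rewrite (Csum_ext N _ (fun l => Cadd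
    (Cmul (Cadd w (RtoC (INR (S l)))) (Cmul (S2w m (S l) w) (f (S l))))
    (Cmul (S2w m l w) (f (S l))))) by (intros; rewrite S2w_SS; ring).
  rewrite (Csum_ext (S N) _ (fun l => Cadd
    (Cmul (Cadd w (RtoC (INR l))) (Cmul (S2w m l w) (f l)))
    (Cmul (S2w m l w) (f (S l))))) by (intros; ring).
  rewrite !Csum_add, Csum_recl, (Csum_recr0 N (fun l => Cmul (S2w m l w) (f (S l))))
    by (rewrite S2w_lt by lia; ring).
  simpl INR; change (RtoC 0) with C0; ring.
Qed.

Lemma Csum_S1w_S N m v f : (m < N)%nat ->
  Csum N (fun l => Cmul (S1w (S m) l v) (f l)) =
  Csum N (fun l => Cmul (S1w m l v)
    (Cadd (Cmul (Cadd (RtoC (INR m)) v) (f l)) (f (S l)))).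
Proof.
  intros HmN; destruct N as [|N]; [lia|].
  rewrite Csum_recl, S1w_S0.
  rewrite (Csum_ext N _ (fun l => Cadd
    (Cmul (Cadd (RtoC (INR m)) v) (Cmul (S1w m (S l) v) (f (S l))))
    (Cmul (S1w m l v) (f (S l))))) by (intros; rewrite S1w_SS; ring).
  rewrite (Csum_ext (S N) _ (fun l => Cadd
    (Cmul (Cadd (RtoC (INR m)) v) (Cmul (S1w m l v) (f l)))
    (Cmul (S1w m l v) (f (S l))))) by (intros; ring).
  rewrite !Csum_add, Csum_recl, (Csum_recr0 N (fun l => Cmul (S1w m l v) (f (S l))))
    by (rewrite S1w_lt by lia; ring).
  ring.
Qed.

Lemma Csum_S2w_0 N w f : Csum N (fun l => Cmul (S2w O l w) (f l)) = f O.
Proof.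
  rewrite (Csum_widen O N) by (lia || intros; rewrite S2w_lt by lia; ring).
  simpl; rewrite S2w00; ring.
Qed.

Lemma Csum_S1w_0 N v f : Csum N (fun l => Cmul (S1w O l v) (f l)) = f O.
Proof.
  rewrite (Csum_widen O N) by (lia || intros; rewrite S1w_lt by lia; ring).
  simpl; rewrite S1w00; ring.
Qed.

Lemma S2w_falling_sum N m z w : (m <= N)%nat ->
  Csum N (fun l => Cmul (S2w m l w) (Cfall z l)) = Cpow (Cadd z w) m.
Proof.
  induction m as [|m IH]; intros HmN; [now rewrite Csum_S2w_0|].
  rewrite Csum_S2w_S by lia; simpl Cpow; rewrite <- IH, <- Csum_mull by lia.
  apply Csum_ext; intros l _; rewrite Cfall_S; unfold Csub; ring.
Qed.

Lemma S1w_power_sum N m Z v : (m <= N)%nat ->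
  Csum N (fun l => Cmul (S1w m l v) (Cpow Z l)) = Crise (Cadd Z v) m.
Proof.
  induction m as [|m IH]; intros HmN; [now rewrite Csum_S1w_0|].
  rewrite Csum_S1w_S, Crise_S, <- IH, <- Csum_mulr by lia.
  apply Csum_ext; intros l _; simpl Cpow; ring.
Qed.

Lemma RtoC_m1_pow_S l : RtoC ((-1) ^ S l) = Copp (RtoC ((-1) ^ l)).
Proof. simpl pow; rewrite RtoC_mul, RtoC_m1; ring. Qed.

Lemma S1w_S2w_orthogonal N m j w : (m <= N)%nat ->
  Csum N (fun l => Cmul (S1w m l w) (Cmul (RtoC ((-1) ^ l)) (S2w l j w))) =
  if Nat.eqb m j then RtoC ((-1) ^ m) else C0.
Proof.
  revert j; induction m as [|m IH]; intros j HmN.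
  - rewrite Csum_S1w_0; destruct j as [|j]; simpl.
    + rewrite S2w00; Cx_compute.
    + rewrite S2w_lt by lia; ring.
  - rewrite Csum_S1w_S by lia; destruct j as [|j].
    + transitivity (Cmul (RtoC (INR m))
        (Csum N (fun l => Cmul (S1w m l w) (Cmul (RtoC ((-1) ^ l)) (S2w l O w))))).
      { rewrite <- Csum_mull; apply Csum_ext; intros.
        rewrite RtoC_m1_pow_S, S2w_S0; ring. }
      rewrite IH by lia; destruct m; simpl; [Cx_compute | ring].
    + transitivity (Csub
        (Cmul (RtoC (INR m - INR (S j)))
           (Csum N (fun l => Cmul (S1w m l w) (Cmul (RtoC ((-1) ^ l)) (S2w l (S j) w)))))
        (Csum N (fun l => Cmul (S1w m l w) (Cmul (RtoC ((-1) ^ l)) (S2w l j w))))).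
      { rewrite <- Csum_mull, <- Csum_sub; apply Csum_ext; intros.
        rewrite RtoC_m1_pow_S, S2w_SS, RtoC_sub; unfold Csub; ring. }
      rewrite !IH by lia; simpl Nat.eqb.
      destruct (Nat.eqb_spec m (S j)) as [->|]; [rewrite (proj2 (Nat.eqb_neq (S j) j)) by lia|].
      * rewrite Rminus_diag; change (RtoC 0) with C0; unfold Csub; ring.
      * destruct (Nat.eqb_spec m j) as [->|]; rewrite ?RtoC_m1_pow_S; unfold Csub; ring.
Qed.

(** * Jackson integrals of polynomials *)

Lemma Rser_lim_infinite_sum a l : infinite_sum a l -> Rser_lim a = l.
Proof.
  intros Ha; unfold Rser_lim; destruct (excluded_middle_informative _) as [Hex|Hno].
  - destruct (constructive_indefinite_description _ Hex) as [l' Hl']; simpl.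
    exact (uniqueness_sum a l' l Hl' Ha).
  - exfalso; apply Hno; exists l; exact Ha.
Qed.

Lemma infinite_sum_ext a b l : (forall n, a n = b n) -> infinite_sum a l -> infinite_sum b l.
Proof.
  intros Hab Ha; apply (Un_cv_ext (sum_f_R0 a)); [intro; apply sum_eq; auto | exact Ha].
Qed.

Lemma infinite_sum_plus a b la lb : infinite_sum a la -> infinite_sum b lb ->
  infinite_sum (fun n => a n + b n) (la + lb).
Proof.
  intros Ha Hb; apply (Un_cv_ext (fun N => sum_f_R0 a N + sum_f_R0 b N)).
  - intro; symmetry; apply sum_plus.
  - now apply CV_plus.
Qed.

Lemma infinite_sum_geom_combination N (d r : nat -> R) :
  (forall i, (i <= N)%nat -> Rabs (r i) < 1) ->
  infinite_sum (fun j => sum_f_R0 (fun i => d i * r i ^ j) N)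
               (sum_f_R0 (fun i => d i / (1 - r i)) N).
Proof.
  assert (Hgeom : forall d r, Rabs r < 1 -> infinite_sum (fun j => d * r ^ j) (d / (1 - r))).
  { intros d0 r0 Hr; apply (Un_cv_ext (fun N => d0 * sum_f_R0 (fun j => 1 * r0 ^ j) N)).
    - intro; rewrite scal_sum; apply sum_eq; intros; ring.
    - apply CV_mult; [|exact (GP_infinite r0 Hr)].
      intros e He; exists O; intros; unfold Rdist; rewrite Rminus_diag, Rabs_R0; lra. }
  induction N as [|N IH]; intros Hr; simpl; [apply Hgeom, Hr; lia|].
  apply infinite_sum_plus; [apply IH; intros; apply Hr; lia | apply Hgeom, Hr; lia].
Qed.

Lemma Rser_lim_qpoly q N (a : nat -> R) : 0 <= q < 1 ->
  Rser_lim (fun j => q ^ j * sum_f_R0 (fun i => a i * (q ^ j) ^ i) N) =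
  sum_f_R0 (fun i => a i / (1 - q ^ S i)) N.
Proof.
  intros Hq; apply Rser_lim_infinite_sum.
  apply (infinite_sum_ext (fun j => sum_f_R0 (fun i => a i * (q ^ S i) ^ j) N)).
  - intro j; rewrite scal_sum; apply sum_eq; intros i _.
    rewrite <- !pow_mult, Rmult_assoc, <- pow_add; do 2 f_equal; lia.
  - apply infinite_sum_geom_combination; intros i _.
    pose proof (pow_lt_1_compat q (S i) Hq (Nat.lt_0_succ i)); rewrite Rabs_right; lra.
Qed.

Lemma Re_Csum n f : Re (Csum n f) = sum_f_R0 (fun i => Re (f i)) n.
Proof. induction n as [|n IH]; simpl; [reflexivity | now rewrite IH]. Qed.
Lemma Im_Csum n f : Im (Csum n f) = sum_f_R0 (fun i => Im (f i)) n.
Proof. induction n as [|n IH]; simpl; [reflexivity | now rewrite IH]. Qed.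

Lemma qnum_S_neq0 q i : 0 <= q < 1 -> qnum q (S i) <> 0.
Proof.
  intros Hq; pose proof (pow_lt_1_compat q (S i) Hq (Nat.lt_0_succ i)); unfold qnum.
  apply Rmult_integral_contrapositive_currified; [lra | apply Rinv_neq_0_compat; lra].
Qed.

Lemma qnum_pow_neq0 q m k : 0 <= q < 1 -> qnum q (S m) ^ k <> 0.
Proof. intros Hq; apply pow_nonzero, qnum_S_neq0, Hq. Qed.

Lemma one_minus_q_ratio q i : 0 <= q < 1 -> (1 - q) * / (1 - q ^ S i) = / qnum q (S i).
Proof.
  intros Hq; pose proof (pow_lt_1_compat q (S i) Hq (Nat.lt_0_succ i)); unfold qnum; field; lra.
Qed.

Lemma jint_poly q N (c : nat -> Cx) f : 0 <= q < 1 ->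
  (forall x, f x = Csum N (fun i => Cmul (c i) (RtoC (x ^ i)))) ->
  jint q f = Csum N (fun i => Cmul (c i) (RtoC (/ qnum q (S i)))).
Proof.
  intros Hq Hf; unfold jint, Cser_lim, Cscale.
  assert (Hseries : forall pr : Cx -> R,
    (forall r z, pr (Cmul (RtoC r) z) = r * pr z) ->
    (forall r z, pr (Cmul z (RtoC r)) = pr z * r) ->
    (forall n g, pr (Csum n g) = sum_f_R0 (fun i => pr (g i)) n) ->
    (1 - q) * Rser_lim (fun j => pr (Cmul (RtoC (q ^ j)) (f (q ^ j)))) =
    pr (Csum N (fun i => Cmul (c i) (RtoC (/ qnum q (S i)))))).
  { intros pr Hl Hr Hsum.
    rewrite (functional_extensionality _
      (fun j => q ^ j * sum_f_R0 (fun i => pr (c i) * (q ^ j) ^ i) N)).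
    - rewrite Rser_lim_qpoly, scal_sum, Hsum by assumption.
      apply sum_eq; intros i _; rewrite Hr, <- (one_minus_q_ratio q i Hq); unfold Rdiv; ring.
    - intro j; rewrite Hl, Hf, Hsum; f_equal; apply sum_eq; intros; apply Hr. }
  apply Cx_ext; [rewrite <- (Hseries Re) | rewrite <- (Hseries Im)];
    intros; simpl; try ring; [apply Re_Csum | apply Im_Csum].
Qed.

Lemma mjint_poly q k N (c : nat -> Cx) f : 0 <= q < 1 ->
  (forall x, f x = Csum N (fun i => Cmul (c i) (RtoC (x ^ i)))) ->
  mjint q k f = Csum N (fun i => Cmul (c i) (RtoC (/ qnum q (S i) ^ k))).
Proof.
  intros Hq; revert c f; induction k as [|k IH]; intros c f Hf.
  - simpl; rewrite Hf; apply Csum_ext; intros; now rewrite pow1, Rinv_1.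
  - simpl mjint; rewrite (jint_poly q N (fun i => Cmul (c i) (RtoC (/ qnum q (S i) ^ k))));
      trivial.
    + apply Csum_ext; intros; simpl pow; rewrite Rinv_mult, RtoC_mul; ring.
    + intro x; rewrite (IH (fun i => Cmul (c i) (RtoC (x ^ i)))).
      * apply Csum_ext; intros; ring.
      * intro p; rewrite Hf; apply Csum_ext; intros; rewrite Rpow_mult_distr, RtoC_mul; ring.
Qed.

Lemma mjint_monomial q k m (r : R) : 0 <= q < 1 ->
  mjint q k (fun P => RtoC (r * P ^ m)) = RtoC (r / qnum q (S m) ^ k).
Proof.
  intros Hq.
  rewrite (mjint_poly q k m (fun i => if Nat.eqb i m then RtoC r else C0)); trivial.
  - rewrite (Csum_ext m _ (fun i => if Nat.eqb i m then RtoC (r / qnum q (S i) ^ k) else C0)).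
    + now rewrite Csum_delta.
    + intros i _; destruct (Nat.eqb i m); [unfold Rdiv; rewrite RtoC_mul|]; ring.
  - intro P; rewrite (Csum_ext m _ (fun i => if Nat.eqb i m then RtoC (r * P ^ i) else C0)).
    + now rewrite Csum_delta.
    + intros i _; destruct (Nat.eqb i m); [rewrite RtoC_mul|]; ring.
Qed.

Lemma mjint_sum_poly q k L N (d : nat -> Cx) (F : nat -> R -> Cx) (c : nat -> nat -> Cx) :
  0 <= q < 1 ->
  (forall l x, (l <= L)%nat -> F l x = Csum N (fun i => Cmul (c l i) (RtoC (x ^ i)))) ->
  mjint q k (fun x => Csum L (fun l => Cmul (d l) (F l x))) =
  Csum L (fun l => Cmul (d l) (mjint q k (F l))).
Proof.
  intros Hq HF.
  rewrite (mjint_poly q k N (fun i => Csum L (fun l => Cmul (d l) (c l i)))); trivial.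
  - rewrite (Csum_ext L _ (fun l => Cmul (d l)
      (Csum N (fun i => Cmul (c l i) (RtoC (/ qnum q (S i) ^ k))))))
      by (intros; f_equal; apply mjint_poly; auto).
    rewrite (Csum_ext L _ (fun l => Csum N (fun i =>
      Cmul (d l) (Cmul (c l i) (RtoC (/ qnum q (S i) ^ k))))))
      by (intros; apply eq_sym, Csum_mull).
    rewrite Csum_exchange; apply Csum_ext; intros.
    rewrite <- Csum_mulr; apply Csum_ext; intros; ring.
  - intro x; rewrite (Csum_ext L _ (fun l => Csum N (fun i =>
      Cmul (Cmul (d l) (c l i)) (RtoC (x ^ i)))))
      by (intros; rewrite HF, <- Csum_mull by assumption; apply Csum_ext; intros; ring).
    rewrite Csum_exchange; apply Csum_ext; intros; apply Csum_mulr.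
Qed.

(** * Explicit formulas *)

Lemma ubern_sdil rho :
  ubern rho = smul (sconst (RtoC (- / rho))) (sdil (RtoC (- rho)) sexpm1).
Proof.
  unfold ubern, sexpm1.
  rewrite sdil_sub, sdil_sexp, sdil_sone, sscale_sconst, (RtoC_opp (/ rho)), sconst_opp.
  replace (Cmul (RtoC (- rho)) Defs.C1) with (RtoC (- rho)) by ring; ring.
Qed.

Lemma ubern_0 rho : ubern rho O = C0.
Proof. unfold ubern, sscale, ssub, sone, sexp, Cscale; simpl; rewrite Rinv_1; Cx_compute. Qed.

(* Only [m <= n] contributes to the coefficient of [t^n], as [u^m = O(t^m)]. *)
Lemma LiOverU_mul_coef rho q k z n :
  smul (LiOverU rho q k) (sexp z) n =
  Csum n (fun m => Cmul (RtoC (/ qnum q (S m) ^ k)) (smul (spow (ubern rho) m) (sexp z) n)).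
Proof.
  unfold smul at 1; unfold LiOverU, Cscale.
  rewrite (Csum_ext n _ (fun i => Csum i (fun m => Cmul (Cmul (RtoC (/ qnum q (S m) ^ k))
    (spow (ubern rho) m i)) (sexp z (n - i)%nat)))) by (intros; apply eq_sym, Csum_mulr).
  rewrite Csum_triangle; apply Csum_ext; intros m Hm; unfold smul.
  rewrite (Csum_shift m n), <- Csum_mull; [apply Csum_ext; intros; ring | lia |].
  intros; rewrite spow_vanish by (apply ubern_0 || lia); ring.
Qed.

Lemma qpolyB_S2w n rho q k z : rho <> 0 ->
  qpolyB n rho q k z = Csum n (fun m =>
    Cmul (RtoC (INR (fact m) * (- rho) ^ n * (- / rho) ^ m / qnum q (S m) ^ k))
         (S2w n m (Cscale (/ rho) z))).
Proof.
  intros Hrho; unfold qpolyB, Cscale at 1; rewrite LiOverU_mul_coef, <- Csum_mull.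
  apply Csum_ext; intros m Hm.
  assert (Hdil : smul (spow (ubern rho) m) (sexp (Copp z)) =
    smul (sconst (RtoC ((- / rho) ^ m))) (sdil (RtoC (- rho)) (S2w_gf (Cscale (/ rho) z) m))).
  { rewrite ubern_sdil, spow_smul, spow_sconst, Cpow_RtoC.
    unfold S2w_gf; rewrite sdil_mul, sdil_sexp, sdil_spow.
    replace (Cmul (RtoC (- rho)) (Cscale (/ rho) z)) with (Copp z); [ring|].
    unfold Cscale, Cmul, Copp, RtoC; apply Cx_ext; simpl; field; assumption. }
  rewrite Hdil, smul_sconstl, S2w_coef; unfold sdil; rewrite Cpow_RtoC.
  rewrite !Cx_ring.(Rmul_assoc), <- !RtoC_mul; do 2 f_equal.
  rewrite <- (Rmult_1_r (INR (fact n))) at 1.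
  rewrite <- (Rinv_r (INR (fact m))) by apply INR_fact_neq_0; unfold Rdiv; ring.
Qed.

Definition mjint_fall (q : R) (k : nat) (s : R) (w : Cx) (l : nat) : Cx :=
  mjint q k (fun P => Cfall (Csub (RtoC (s * P)) w) l).

Lemma qpolyC_mjint_fall l rho q k y :
  qpolyC l rho q k y = Cscale (rho ^ l) (mjint_fall q k (/ rho) (Cscale (/ rho) y) l).
Proof.
  unfold qpolyC, mjint_fall; do 3 f_equal; apply functional_extensionality; intro P.
  f_equal; Cx_compute.
Qed.

Lemma qpolyChat_mjint_fall l rho q k y :
  qpolyChat l rho q k y =
  Cscale (rho ^ l) (mjint_fall q k (- / rho) (Copp (Cscale (/ rho) y)) l).
Proof.
  unfold qpolyChat, mjint_fall; do 3 f_equal; apply functional_extensionality; intro P.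
  f_equal; Cx_compute.
Qed.

Lemma Cfall_affine_S1w N l s w P : (l <= N)%nat ->
  Cfall (Csub (RtoC (s * P)) w) l =
  Csum N (fun i => Cmul (Cmul (RtoC ((-1) ^ l * (- s) ^ i)) (S1w l i w)) (RtoC (P ^ i))).
Proof.
  intros HlN; rewrite Cfall_Crise.
  replace (Copp (Csub (RtoC (s * P)) w)) with (Cadd (RtoC (- s * P)) w) by Cx_compute.
  rewrite <- (S1w_power_sum N l _ _ HlN), <- Csum_mull; apply Csum_ext; intros.
  rewrite Cpow_RtoC, Rpow_mult_distr, !RtoC_mul; ring.
Qed.

Lemma mjint_fall_S1w q k s w l : 0 <= q < 1 ->
  mjint_fall q k s w l =
  Csum l (fun i => Cmul (RtoC ((-1) ^ l * (- s) ^ i / qnum q (S i) ^ k)) (S1w l i w)).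
Proof.
  intros Hq; unfold mjint_fall.
  rewrite (mjint_poly q k l (fun i => Cmul (RtoC ((-1) ^ l * (- s) ^ i)) (S1w l i w))).
  - apply Csum_ext; intros; unfold Rdiv; rewrite !RtoC_mul; ring.
  - assumption.
  - intro P; apply Cfall_affine_S1w; lia.
Qed.

Lemma qpolyC_S1w n rho q k z : 0 <= q < 1 ->
  qpolyC n rho q k z = Csum n (fun m =>
    Cmul (RtoC (rho ^ n * (-1) ^ n * (- / rho) ^ m / qnum q (S m) ^ k))
         (S1w n m (Cscale (/ rho) z))).
Proof.
  intros Hq; rewrite qpolyC_mjint_fall, mjint_fall_S1w by assumption.
  unfold Cscale; rewrite <- Csum_mull; apply Csum_ext; intros.
  unfold Rdiv; rewrite !RtoC_mul; ring.
Qed.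

Lemma qpolyChat_S1w n rho q k z : 0 <= q < 1 ->
  qpolyChat n rho q k z = Csum n (fun m =>
    Cmul (RtoC (rho ^ n * (-1) ^ n * (/ rho) ^ m / qnum q (S m) ^ k))
         (S1w n m (Copp (Cscale (/ rho) z)))).
Proof.
  intros Hq; rewrite qpolyChat_mjint_fall, mjint_fall_S1w, Ropp_involutive by assumption.
  unfold Cscale; rewrite <- Csum_mull; apply Csum_ext; intros.
  unfold Rdiv; rewrite !RtoC_mul; ring.
Qed.

Lemma sum_S2w_mjint_fall q k s w n m : 0 <= q < 1 -> (m <= n)%nat ->
  Csum n (fun l => Cmul (S2w m l w) (mjint_fall q k s w l)) = RtoC (s ^ m / qnum q (S m) ^ k).
Proof.
  intros Hq Hmn; unfold mjint_fall.
  rewrite <- (mjint_sum_poly q k n n _ _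
    (fun l i => Cmul (RtoC ((-1) ^ l * (- s) ^ i)) (S1w l i w))) by
    (assumption || intros; apply Cfall_affine_S1w; assumption).
  rewrite <- mjint_monomial by assumption; f_equal; apply functional_extensionality; intro P.
  rewrite S2w_falling_sum by assumption.
  replace (Cadd (Csub (RtoC (s * P)) w) w) with (RtoC (s * P)) by Cx_compute.
  rewrite Cpow_RtoC, Rpow_mult_distr; reflexivity.
Qed.

(** * The four conversion formulas *)

Lemma pow_sub_mul rho n l : (l <= n)%nat -> rho ^ (n - l) * rho ^ l = rho ^ n.
Proof. intros; rewrite <- pow_add; f_equal; lia. Qed.

Lemma Ropp_pow r m : (- r) ^ m = (-1) ^ m * r ^ m.
Proof. rewrite <- Rpow_mult_distr; f_equal; ring. Qed.

Lemma pow_m1_sqr m : (-1) ^ m * (-1) ^ m = 1.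
Proof. rewrite <- Rpow_mult_distr, <- (pow1 m); f_equal; ring. Qed.

Lemma pow_m1_sub n m : (m <= n)%nat -> (-1) ^ (n - m) = (-1) ^ n * (-1) ^ m.
Proof.
  intros Hmn; rewrite <- (pow_sub_mul (-1) n m), Rmult_assoc, pow_m1_sqr by assumption; ring.
Qed.

Lemma sum_S2w_scaled_mjint_fall q k rho s w n m : 0 <= q < 1 -> (m <= n)%nat ->
  Csum n (fun l => Cscale (rho ^ (n - l))
    (Cmul (S2w m l w) (Cscale (rho ^ l) (mjint_fall q k s w l)))) =
  RtoC (rho ^ n * s ^ m / qnum q (S m) ^ k).
Proof.
  intros Hq Hmn.
  rewrite (Csum_ext n _ (fun l => Cmul (RtoC (rho ^ n)) (Cmul (S2w m l w) (mjint_fall q k s w l)))).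
  - rewrite Csum_mull, sum_S2w_mjint_fall, <- RtoC_mul by assumption; f_equal; unfold Rdiv; ring.
  - intros l Hl; unfold Cscale; rewrite <- (pow_sub_mul rho n l), RtoC_mul by assumption; ring.
Qed.

Lemma sum_S2w_qpolyC q k rho y n m : 0 <= q < 1 -> (m <= n)%nat ->
  Csum n (fun l => Cscale (rho ^ (n - l))
    (Cmul (S2w m l (Cscale (/ rho) y)) (qpolyC l rho q k y))) =
  RtoC (rho ^ n * (/ rho) ^ m / qnum q (S m) ^ k).
Proof.
  intros Hq Hmn; rewrite <- (sum_S2w_scaled_mjint_fall q k rho _ (Cscale (/ rho) y)) by assumption.
  apply Csum_ext; intros; now rewrite qpolyC_mjint_fall.
Qed.

Lemma sum_S2w_qpolyChat q k rho y n m : 0 <= q < 1 -> (m <= n)%nat ->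
  Csum n (fun l => Cscale (rho ^ (n - l))
    (Cmul (S2w m l (Copp (Cscale (/ rho) y))) (qpolyChat l rho q k y))) =
  RtoC (rho ^ n * (- / rho) ^ m / qnum q (S m) ^ k).
Proof.
  intros Hq Hmn.
  rewrite <- (sum_S2w_scaled_mjint_fall q k rho _ (Copp (Cscale (/ rho) y))) by assumption.
  apply Csum_ext; intros; now rewrite qpolyChat_mjint_fall.
Qed.

Lemma sum_S1w_qpolyB q k rho y n m : rho <> 0 -> 0 <= q < 1 -> (m <= n)%nat ->
  Csum n (fun l => Cscale (rho ^ (n - l))
    (Cmul (S1w m l (Cscale (/ rho) y)) (qpolyB l rho q k y))) =
  RtoC (rho ^ n * (/ rho) ^ m * INR (fact m) / qnum q (S m) ^ k).
Proof.
  intros Hrho Hq Hmn; set (w := Cscale (/ rho) y).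
  set (coef j := rho ^ n * (- / rho) ^ j * INR (fact j) / qnum q (S j) ^ k).
  rewrite (Csum_ext n _ (fun l => Csum n (fun j => Cmul (RtoC (coef j))
    (Cmul (S1w m l w) (Cmul (RtoC ((-1) ^ l)) (S2w l j w)))))).
  - rewrite Csum_exchange.
    rewrite (Csum_ext n _ (fun j => if Nat.eqb j m then RtoC (coef j * (-1) ^ j) else C0)).
    + rewrite Csum_delta by assumption; f_equal; unfold coef.
      rewrite Ropp_pow; unfold Rdiv.
      rewrite <- (Rmult_1_l (rho ^ n * (/ rho) ^ m * INR (fact m) * / qnum q (S m) ^ k)).
      rewrite <- (pow_m1_sqr m); ring.
    + intros j Hj; rewrite Csum_mull, S1w_S2w_orthogonal, Nat.eqb_sym by assumption.
      destruct (Nat.eqb_spec j m) as [->|]; [rewrite RtoC_mul|]; ring.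
  - intros l Hl; rewrite qpolyB_S2w by assumption; fold w.
    rewrite (Csum_widen l n (fun j => Cmul (RtoC (coef j))
      (Cmul (S1w m l w) (Cmul (RtoC ((-1) ^ l)) (S2w l j w)))))
      by (assumption || intros; rewrite S2w_lt by lia; ring).
    unfold Cscale; rewrite <- Csum_mull, <- Csum_mull; apply Csum_ext; intros j Hj.
    unfold coef; rewrite (Ropp_pow rho), <- (pow_sub_mul rho n l) by assumption.
    unfold Rdiv; rewrite !RtoC_mul; ring.
Qed.

Lemma Csum_regroup n rho (beta : nat -> R) (A : nat -> Cx) (B : nat -> nat -> Cx) (D : nat -> Cx) :
  Csum n (fun l => Csum n (fun m =>
    Cscale (beta m * rho ^ (n - l)) (Cmul (Cmul (A m) (B m l)) (D l)))) =
  Csum n (fun m => Cmul (RtoC (beta m))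
    (Cmul (A m) (Csum n (fun l => Cscale (rho ^ (n - l)) (Cmul (B m l) (D l)))))).
Proof.
  rewrite Csum_exchange; apply Csum_ext; intros m _.
  rewrite <- !Csum_mull; apply Csum_ext; intros l _; unfold Cscale; rewrite RtoC_mul; ring.
Qed.

Lemma Cmul_RtoC_factor (a b c : R) z : a = b * c ->
  Cmul (RtoC a) z = Cmul (RtoC b) (Cmul z (RtoC c)).
Proof. intros ->; rewrite RtoC_mul; ring. Qed.

Lemma qpolyB_qpolyC n k rho q x y : rho <> 0 -> 0 <= q < 1 ->
  qpolyB n rho q k x =
    Csum n (fun l => Csum n (fun m =>
      Cscale ((-1) ^ (n - m) * INR (fact m) * rho ^ (n - l))
        (Cmul (Cmul (S2w n m (Cscale (/ rho) x)) (S2w m l (Cscale (/ rho) y)))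
              (qpolyC l rho q k y)))).
Proof.
  intros Hrho Hq; rewrite Csum_regroup, qpolyB_S2w by assumption.
  apply Csum_ext; intros m Hm; rewrite sum_S2w_qpolyC by assumption.
  apply Cmul_RtoC_factor; rewrite pow_m1_sub, !Ropp_pow by assumption; unfold Rdiv; ring.
Qed.

Lemma qpolyB_qpolyChat n k rho q x y : rho <> 0 -> 0 <= q < 1 ->
  qpolyB n rho q k x =
    Csum n (fun l => Csum n (fun m =>
      Cscale ((-1) ^ n * INR (fact m) * rho ^ (n - l))
        (Cmul (Cmul (S2w n m (Cscale (/ rho) x)) (S2w m l (Copp (Cscale (/ rho) y))))
              (qpolyChat l rho q k y)))).
Proof.
  intros Hrho Hq; rewrite Csum_regroup, qpolyB_S2w by assumption.
  apply Csum_ext; intros m Hm; rewrite sum_S2w_qpolyChat by assumption.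
  apply Cmul_RtoC_factor; rewrite (Ropp_pow rho); unfold Rdiv; ring.
Qed.

Lemma qpolyC_qpolyB n k rho q x y : rho <> 0 -> 0 <= q < 1 ->
  qpolyC n rho q k x =
    Csum n (fun l => Csum n (fun m =>
      Cscale ((-1) ^ (n - m) / INR (fact m) * rho ^ (n - l))
        (Cmul (Cmul (S1w n m (Cscale (/ rho) x)) (S1w m l (Cscale (/ rho) y)))
              (qpolyB l rho q k y)))).
Proof.
  intros Hrho Hq; rewrite Csum_regroup, qpolyC_S1w by assumption.
  apply Csum_ext; intros m Hm; rewrite sum_S1w_qpolyB by assumption.
  apply Cmul_RtoC_factor; rewrite pow_m1_sub, (Ropp_pow (/ rho)) by assumption.
  field; auto using INR_fact_neq_0, qnum_pow_neq0.
Qed.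

Lemma qpolyChat_qpolyB n k rho q x y : rho <> 0 -> 0 <= q < 1 ->
  qpolyChat n rho q k x =
    Csum n (fun l => Csum n (fun m =>
      Cscale ((-1) ^ n / INR (fact m) * rho ^ (n - l))
        (Cmul (Cmul (S1w n m (Copp (Cscale (/ rho) x))) (S1w m l (Cscale (/ rho) y)))
              (qpolyB l rho q k y)))).
Proof.
  intros Hrho Hq; rewrite Csum_regroup, qpolyChat_S1w by assumption.
  apply Csum_ext; intros m Hm; rewrite sum_S1w_qpolyB by assumption.
  apply Cmul_RtoC_factor; field; auto using INR_fact_neq_0, qnum_pow_neq0.
Qed.

Theorem theorem8 (n k : nat) (rho q : R) (x y : Cx)
  (hk : (1 <= k)%nat) (hrho : rho <> 0) (hq : 0 <= q < 1) :
  qpolyB n rho q k x =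
    Csum n (fun l => Csum n (fun m =>
      Cscale ((-1) ^ (n - m) * INR (fact m) * rho ^ (n - l))
        (Cmul (Cmul (S2w n m (Cscale (/ rho) x)) (S2w m l (Cscale (/ rho) y)))
              (qpolyC l rho q k y))))
  /\
  qpolyB n rho q k x =
    Csum n (fun l => Csum n (fun m =>
      Cscale ((-1) ^ n * INR (fact m) * rho ^ (n - l))
        (Cmul (Cmul (S2w n m (Cscale (/ rho) x)) (S2w m l (Copp (Cscale (/ rho) y))))
              (qpolyChat l rho q k y))))
  /\
  qpolyC n rho q k x =
    Csum n (fun l => Csum n (fun m =>
      Cscale ((-1) ^ (n - m) / INR (fact m) * rho ^ (n - l))
        (Cmul (Cmul (S1w n m (Cscale (/ rho) x)) (S1w m l (Cscale (/ rho) y)))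
              (qpolyB l rho q k y))))
  /\
  qpolyChat n rho q k x =
    Csum n (fun l => Csum n (fun m =>
      Cscale ((-1) ^ n / INR (fact m) * rho ^ (n - l))
        (Cmul (Cmul (S1w n m (Copp (Cscale (/ rho) x))) (S1w m l (Cscale (/ rho) y)))
              (qpolyB l rho q k y)))).
Proof.
  repeat split; auto using qpolyB_qpolyC, qpolyB_qpolyChat, qpolyC_qpolyB, qpolyChat_qpolyB.
Qed.
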